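(* Fix an integer $L\ge 0$. The set function $F_1:2^V\to\mathbb{R}$, $F_1(S)=nL-\sum_{u\in V\setminus S}h^L_{uS}$, satisfies $F_1(\emptyset)=0$, is nondecreasing (i.e. $F_1(S)\le F_1(T)$ whenever $S\subseteq T\subseteq V$), and is submodular (i.e. for all $S\subseteq T\subseteq V$ and $j\in V\setminus T$, $F_1(S\cup\{j\})-F_1(S)\ge F_1(T\cup\{j\})-F_1(T)$).
   Context: Let $G=(V,E)$ be a finite undirected, unweighted graph with $n=|V|$ nodes in which every node $u$ has degree $d_u\ge 1$. For $u\in V$, the random walk starting at $u$ is the Markov chain $(Z_u^t)_{t\ge 0}$ with $Z_u^0=u$ and $Z_u^{t+1}$ chosen uniformly at random among the neighbors of $Z_u^t$. For $S\subseteq V$ and $u\in V$, define $T^L_{uS}=\min\{\min\{t\ge 0: Z_u^t\in S\},\,L\}$ (with $\min\emptyset=\infty$), and $h^L_{uS}=\mathbb{E}[T^L_{uS}]$. *)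

From HB Require Import structures.
From mathcomp Require Import all_boot all_order all_algebra.
Set Implicit Arguments. Unset Strict Implicit. Unset Printing Implicit Defensive.
Import Order.TTheory GRing.Theory Num.Theory.
Local Open Scope ring_scope.

Section RW.
Variables (R : realFieldType) (V : finType) (e : rel V).

Definition deg (x : V) : nat := #|[set y | e x y]|.

Definition trans (x y : V) : R := if e x y then (deg x)%:R^-1 else 0.

(* probability that the walk from u has Z^1..Z^L equal to p *)
Definition walk_prob (L : nat) (u : V) (p : L.-tuple V) : R :=
  \prod_(i < L) trans (nth u (u :: p) i) (nth u (u :: p) i.+1).

(* T^L_{uS} as a function of the trajectory (Z^0,...,Z^L) = u :: p :
   min (first t with Z^t in S) L ; find returns size (= L+1) if none *)
Definition trunc_hit (L : nat) (S : {set V}) (u : V) (p : seq V) : nat :=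
  minn (find (fun x => x \in S) (u :: p)) L.

(* h^L_{uS} = E[T^L_{uS}], the expectation over the law of (Z^1,...,Z^L) *)
Definition hL (L : nat) (S : {set V}) (u : V) : R :=
  \sum_(p : (L.-tuple V)%type) @walk_prob L u p * (trunc_hit L S u p)%:R.

Definition F1 (L : nat) (S : {set V}) : R :=
  (#|V| * L)%:R - \sum_(u in ~: S) hL L S u.

End RW.

From HB Require Import structures.
From mathcomp Require Import all_boot all_order all_algebra.
From mathcomp Require Import zify.
Set Implicit Arguments. Unset Strict Implicit. Unset Printing Implicit Defensive.
Import Order.TTheory GRing.Theory Num.Theory.
Local Open Scope ring_scope.

(* On a trajectory u :: p of the walk, call L - T^L_{uS} the
   time saved by the target set S.  Pathwise, the saved time is
   nondecreasing and submodular in S: the first visit to S shrinks as S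
   grows, the first visit to j |: S is the minimum of the first visits to S
   and to j, and a minimum truncated at L has diminishing returns.  Because
   the law of the trajectory is a probability distribution and a walk
   starting inside S saves the whole horizon L, F_1(S) equals the expected
   saved time summed over all starting nodes, a nonnegative combination of
   the pathwise saved times; both properties survive such combinations.
   Finally F_1(set0) = 0 since an empty target never saves any time. *)

Section SetFunctions.
Variables (R : numDomainType) (V : finType).

Definition nondecreasing_set (f : {set V} -> R) : Prop :=
  forall S T : {set V}, S \subset T -> f S <= f T.

Definition submodular_set (f : {set V} -> R) : Prop :=
  forall (S T : {set V}) (j : V), S \subset T -> j \notin T ->
    f (j |: T) - f T <= f (j |: S) - f S.

Variables (I : finType) (w : I -> R) (f : I -> {set V} -> R).
Hypothesis w_ge0 : forall i, 0 <= w i.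

Lemma conic_nondecreasing :
  (forall i, nondecreasing_set (f i)) ->
  nondecreasing_set (fun S => \sum_i w i * f i S).
Proof.
move=> f_mono S T ST; apply: ler_sum => i _.
by apply: ler_wpM2l; [exact: w_ge0 | exact: f_mono].
Qed.

Lemma conic_submodular :
  (forall i, submodular_set (f i)) ->
  submodular_set (fun S => \sum_i w i * f i S).
Proof.
move=> f_sub S T j ST jT; rewrite -!sumrB; apply: ler_sum => i _.
by rewrite -!mulrBr; apply: ler_wpM2l; [exact: w_ge0 | exact: f_sub].
Qed.

End SetFunctions.

Section SavedTime.
Variables (R : numDomainType) (V : finType) (L : nat).

Lemma find_setU1 (S : {set V}) (j : V) (s : seq V) :
  find (fun x => x \in j |: S) s =
  minn (find (fun x => x \in S) s) (find (pred1 j) s).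
Proof.
elim: s => //= x s IH; rewrite in_setU1.
by case: (x == j) (x \in S) => [] [] //=; rewrite ?min0n ?minn0 // IH minnSS.
Qed.

Lemma find_subset (S T : {set V}) (s : seq V) : S \subset T ->
  (find (fun x => x \in T) s <= find (fun x => x \in S) s)%N.
Proof. by move=> ST; apply: sub_find => x; apply: (subsetP ST). Qed.

Definition saved_time (S : {set V}) (u : V) (p : seq V) : nat :=
  L - trunc_hit L S u p.

Lemma saved_time_nondecreasing u p :
  nondecreasing_set (fun S => (saved_time S u p)%:R : R).
Proof.
move=> S T ST; have := find_subset (u :: p) ST.
rewrite ler_nat /saved_time /trunc_hit; lia.
Qed.

(* Pathwise submodularity; it holds even without j \notin T. *)
Lemma saved_time_submodular u p :
  submodular_set (fun S => (saved_time S u p)%:R : R).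
Proof.
move=> S T j ST _; have := find_subset (u :: p) ST.
rewrite /saved_time /trunc_hit !find_setU1 -!natrB ?ler_nat; lia.
Qed.

Lemma saved_time_set0 u (p : L.-tuple V) : saved_time set0 u p = 0%N.
Proof.
rewrite /saved_time /trunc_hit hasNfind; last by apply/hasPn => x _; rewrite in_set0.
rewrite /= size_tuple; lia.
Qed.

Lemma trunc_hit_start (S : {set V}) u p : u \in S -> trunc_hit L S u p = 0%N.
Proof. by move=> uS; rewrite /trunc_hit /= uS min0n. Qed.

End SavedTime.

Section WalkLaw.
Variables (R : realFieldType) (V : finType) (e : rel V).
Hypothesis deg_pos : forall u : V, (0 < deg e u)%N.

Lemma trans_ge0 x y : 0 <= trans R e x y.
Proof. by rewrite /trans; case: (e x y); rewrite ?invr_ge0 ?ler0n. Qed.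

Lemma walk_prob_ge0 L u (p : L.-tuple V) : 0 <= walk_prob R e u p.
Proof. by apply: prodr_ge0 => i _; apply: trans_ge0. Qed.

Lemma sum_trans u : \sum_y trans R e u y = 1.
Proof.
rewrite /trans -big_mkcond /= sumr_const.
have -> : #|[pred y | e u y]| = deg e u by rewrite /deg cardsE.
by rewrite -[_ *+ _]mulr_natr mulVf // pnatr_eq0 -lt0n deg_pos.
Qed.

Lemma walk_prob_cons L u x (t : L.-tuple V) :
  walk_prob R e u [tuple of x :: t] = trans R e u x * walk_prob R e x t.
Proof.
rewrite /walk_prob big_ord_recl /=; congr (_ * _).
apply: eq_bigr => i _ /=; rewrite add0n.
rewrite [nth u t i](set_nth_default x); last by rewrite size_tuple.
by rewrite [nth u (x :: t) i](set_nth_default x) //= size_tuple ltnS ltnW.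
Qed.

Lemma sum_walk_prob L u : \sum_(p : L.-tuple V) walk_prob R e u p = 1.
Proof.
elim: L u => [|L IH] u.
  rewrite (big_pred1 [tuple]) ?/walk_prob ?big_ord0 // => p.
  by apply/esym/eqP/val_inj; rewrite /= (size0nil (size_tuple p)).
rewrite (reindex (fun q : V * L.-tuple V => [tuple of q.1 :: q.2])) /=; last first.
  apply: onW_bij; exists (fun t : L.+1.-tuple V => (thead t, behead_tuple t)).
    by case=> x t /=; rewrite theadE; congr pair; apply: val_inj.
  by move=> t; rewrite [t]tuple_eta /= theadE; apply: val_inj.
rewrite -(pair_bigA _ (fun x (t : L.-tuple V) =>
   walk_prob R e u [tuple of x :: t])) /= -(sum_trans u).
apply: eq_bigr => x _.
by under eq_bigr => t _ do rewrite walk_prob_cons; rewrite -mulr_sumr IH mulr1.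
Qed.

Lemma F1_expected_saved_time L (S : {set V}) :
  F1 R e L S = \sum_(x : V * L.-tuple V)
                 walk_prob R e x.1 x.2 * (saved_time L S x.1 x.2)%:R.
Proof.
rewrite -(pair_bigA _ (fun u (p : L.-tuple V) =>
   walk_prob R e u p * (saved_time L S u p)%:R)) /=.
have saved_u u : \sum_(p : L.-tuple V) walk_prob R e u p * (saved_time L S u p)%:R
                 = L%:R - (if u \in ~: S then hL R e L S u else 0).
  have -> : (L%:R : R) = \sum_(p : L.-tuple V) walk_prob R e u p * L%:R.
    by rewrite -mulr_suml sum_walk_prob mul1r.
  case: ifP => [_ | uNS]; rewrite ?subr0 -?sumrB; apply: eq_bigr => p _.
    by rewrite /saved_time natrB ?geq_minr // mulrBr.
  have uS : u \in S by move: uNS; rewrite in_setC => /negbFE.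
  by rewrite /saved_time trunc_hit_start // subn0.
under eq_bigr => u _ do rewrite saved_u.
rewrite sumrB -big_mkcond /F1 sumr_const -mulrnA [in RHS]mulnC.
by congr (((_ * _)%N)%:R - _); apply: eq_card.
Qed.

End WalkLaw.

Theorem theorem4 (R : realFieldType) (V : finType) (e : rel V)
  (e_sym : symmetric e) (e_irr : irreflexive e)
  (deg_pos : forall u : V, (0 < deg e u)%N) (L : nat) :
  F1 R e L set0 = 0 /\
  (forall S T : {set V}, S \subset T -> F1 R e L S <= F1 R e L T) /\
  (forall (S T : {set V}) (j : V), S \subset T -> j \notin T ->
     F1 R e L (j |: S) - F1 R e L S >= F1 R e L (j |: T) - F1 R e L T).
Proof.
have F1E := F1_expected_saved_time R deg_pos L.
have w_ge0 (x : V * L.-tuple V) : 0 <= walk_prob R e x.1 x.2.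
  exact: walk_prob_ge0.
split; [|split].
- by rewrite F1E big1 // => x _; rewrite saved_time_set0 mulr0.
- move=> S T ST; rewrite !F1E.
  exact: (conic_nondecreasing w_ge0 (fun x => saved_time_nondecreasing R L x.1 x.2) ST).
- move=> S T j ST jT; rewrite !F1E.
  exact: (conic_submodular w_ge0 (fun x => saved_time_submodular R L x.1 x.2) ST jT).
Qed.
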